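(* Fix $P_{\max}>0$. For thresholds $(Q,P_{\rm avg})$ let (P2)$_{Q,P_{\rm avg}}$ denote problem (P2). Let $(Q_x,\bar P_x)$, $(Q_y,\bar P_y)$ be threshold pairs and suppose $(P^*_x,\rho^*_x)$ and $(P^*_y,\rho^*_y)$ are optimal policy pairs for (P2)$_{Q_x,\bar P_x}$ and (P2)$_{Q_y,\bar P_y}$. Then for every $\theta\in[0,1]$ there is a policy pair $(P_z,\rho_z)$ with $0\le P_{z,\nu}\le P_{\max}$, $0\le\rho_{z,\nu}\le1$, such that $\mathbb{E}[Q^{\rm NL}_\nu(P_{z,\nu},\rho_{z,\nu})]\ge\theta Q_x+(1-\theta)Q_y$, $\mathbb{E}[P_{z,\nu}]\le\theta\bar P_x+(1-\theta)\bar P_y$, and $\mathbb{E}[R_\nu(P_{z,\nu},\rho_{z,\nu})]\ge\theta\,\mathbb{E}[R_\nu(P^*_{x,\nu},\rho^*_{x,\nu})]+(1-\theta)\,\mathbb{E}[R_\nu(P^*_{y,\nu},\rho^*_{y,\nu})]$. (That is, (P2) satisfies the time-sharing condition.)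
   Context: Standing model: constants $a,b,P_s,T,\sigma^2>0$ are fixed and $\Omega=1/(1+e^{ab})$. Fading is modeled on a probability space carrying independent random variables $h$ (channel power gain, values in $(0,\infty)$, $\mathbb{E}[h]<\infty$) and $U$ (uniform on $[0,1]$). A fading state is $\nu=(h_\nu,U_\nu)$, distributed as $(h,U)$; $\mathbb{E}$ is expectation over the fading state. A policy is a Borel measurable function of the fading state. For a fading state with gain $h_\nu$, transmit power $p\ge0$ and power-splitting ratio $\rho\in[0,1]$: $R_\nu(p,\rho)=\ln\big(1+(1-\rho)h_\nu p/\sigma^2\big)$ (rate, in nats); $\Psi_\nu(p,\rho)=1/(1+e^{-a(\rho h_\nu p-b)})$; $Q^{\rm NL}_\nu(p,\rho)=P_sT(\Psi_\nu(p,\rho)-\Omega)/(1-\Omega)$ (harvested energy). Problem (P2) (short-term power limit $P_{\max}$, average power limit $P_{\rm avg}$, energy threshold $Q$): maximize $\mathbb{E}[R_\nu(P_\nu,\rho_\nu)]$ over pairs of policies $(P_\nu,\rho_\nu)$ with $0\le P_\nu\le P_{\max}$, $0\le\rho_\nu\le1$, subject to $\mathbb{E}[Q^{\rm NL}_\nu(P_\nu,\rho_\nu)]\ge Q$ and $\mathbb{E}[P_\nu]\le P_{\rm avg}$. *)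

From HB Require Import structures.
From mathcomp Require Import all_boot all_order all_algebra.
From mathcomp Require Import all_classical all_reals all_analysis.
Set Implicit Arguments. Unset Strict Implicit. Unset Printing Implicit Defensive.
Import Order.TTheory GRing.Theory Num.Theory.
Local Open Scope classical_set_scope.
Local Open Scope ring_scope.

Definition Omg {R : realType} (a b : R) : R := 1 / (1 + expR (a * b)).

Definition rate {R : realType} (sigma2 h p rho : R) : R :=
  ln (1 + (1 - rho) * h * p / sigma2).

Definition Psi {R : realType} (a b h p rho : R) : R :=
  1 / (1 + expR (- (a * (rho * h * p - b)))).

Definition QNL {R : realType} (a b Ps T h p rho : R) : R :=
  Ps * T * (Psi a b h p rho - Omg a b) / (1 - Omg a b).

(* A policy is a Borel measurable function of the fading state (h,U) in R*R. *)
Definition policy {R : realType} (f : R * R -> R) : Prop :=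
  measurable_fun setT f.

Section Fading.
Context {d : measure_display} {Om : measurableType d} {R : realType}
  (P : probability Om R) (h U : Om -> R).

Definition fstate (w : Om) : R * R := (h w, U w).

Definition Erate (sigma2 : R) (Pf rhof : R * R -> R) : \bar R :=
  'E_P[fun w => rate sigma2 (h w) (Pf (fstate w)) (rhof (fstate w))].
Definition Eenergy (a b Ps T : R) (Pf rhof : R * R -> R) : \bar R :=
  'E_P[fun w => QNL a b Ps T (h w) (Pf (fstate w)) (rhof (fstate w))].
Definition Epower (Pf : R * R -> R) : \bar R :=
  'E_P[fun w => Pf (fstate w)].

Definition P2_feasible (a b Ps T Pmax Q Pavg : R) (Pf rhof : R * R -> R) : Prop :=
  [/\ policy Pf /\ policy rhof,
      (forall x, 0 <= Pf x <= Pmax), (forall x, 0 <= rhof x <= 1),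
      (Eenergy a b Ps T Pf rhof >= Q%:E)%E & (Epower Pf <= Pavg%:E)%E].

Definition P2_optimal (a b Ps T sigma2 Pmax Q Pavg : R) (Pf rhof : R * R -> R) : Prop :=
  P2_feasible a b Ps T Pmax Q Pavg Pf rhof /\
  forall Pf' rhof', P2_feasible a b Ps T Pmax Q Pavg Pf' rhof' ->
    (Erate sigma2 Pf' rhof' <= Erate sigma2 Pf rhof)%E.
End Fading.

Definition fading_model {d : measure_display} {Om : measurableType d} {R : realType}
  (P : probability Om R) (h U : Om -> R) : Prop :=
  [/\ measurable_fun setT h /\ measurable_fun setT U,
      (forall w, 0 < h w),
      ('E_P[h] < +oo)%E,
      (forall B : set R, measurable B ->
         P (U @^-1` B) = (@lebesgue_measure R) (B `&` `[0, 1]))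
    & (forall A B : set R, measurable A -> measurable B ->
         P (h @^-1` A `&` U @^-1` B) = (P (h @^-1` A) * P (U @^-1` B))%E)].

From HB Require Import structures.
From mathcomp Require Import all_boot all_order all_algebra.
From mathcomp Require Import all_classical all_reals all_analysis measurable_realfun.
From mathcomp Require Import ring lra.
Set Implicit Arguments. Unset Strict Implicit. Unset Printing Implicit Defensive.
Import Order.TTheory GRing.Theory Num.Theory.
Import numFieldNormedType.Exports.
Local Open Scope classical_set_scope.
Local Open Scope ring_scope.

(** Time sharing is realised through the uniform component [U] of the fading
    state: the combined policy follows the x-policies, fed with [U / θ], when
    [U <= θ], and the y-policies, fed with [(U - θ) / (1 - θ)], otherwise.  On
    each of the two events the rescaled variable is again uniform on [0, 1] and
    independent of [h], so every expectation of a nonnegative function of the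
    fading state and the combined policies splits as [θ E_x + (1 - θ) E_y].
    The three required bounds then follow from the feasibility of the two
    optimal pairs. *)

(* The measures [pushforward m f] and [mrestr m mD] are only measures given
   proofs that [f] and [D] are measurable, so they cannot be inferred. *)
Notation image_measure :=
  measure_function_pushforward__canonical__measure_function_Measure.
Notation restricted_measure :=
  measure_function_mrestr__canonical__measure_function_Measure.

Definition rescale {R : realType} (al c u : R) : R := (u - al) / c.

Definition timeshare {R : realType} (t : R) (f g : R * R -> R) (s : R * R) : R :=
  if s.2 <= t then f (s.1, rescale 0 t s.2) else g (s.1, rescale t (1 - t) s.2).

Lemma measurable_rescale (R : realType) (al c : R) :
  measurable_fun [set: R] (rescale al c).
Proof. by apply: measurable_funM => //; exact: measurable_funB. Qed.

Lemma measurable_timeshare (R : realType) (t : R) (f g : R * R -> R) :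
  measurable_fun setT f -> measurable_fun setT g ->
  measurable_fun setT (timeshare t f g).
Proof.
have mrs al c : measurable_fun [set: R * R] (fun s => (s.1, rescale al c s.2)).
  apply: measurable_fun_pair => //.
  exact: measurableT_comp (measurable_rescale al c) measurable_snd.
move=> mf mg; apply: measurable_fun_ifT.
- by apply: measurable_fun_ler => //; exact: measurable_snd.
- exact: measurableT_comp mf (mrs _ _).
- exact: measurableT_comp mg (mrs _ _).
Qed.

Lemma lebesgue_measure_preimage_rescale (R : realType) (al c : R) (C : set R) :
  0 < c -> measurable C ->
  lebesgue_measure (rescale al c @^-1` C) = (c%:E * lebesgue_measure C)%E.
Proof.
move=> c0 mC.
pose phi := rescale al c : measurableTypeR R -> measurableTypeR R.
have mphi : measurable_fun [set: measurableTypeR R] phi.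
  exact: measurable_rescale.
have ic0 : 0 <= c^-1 by rewrite invr_ge0 ltW.
pose nu := mscale (NngNum ic0) (image_measure lebesgue_measure mphi).
have := @lebesgue_measure_unique R nu _ C mC.
rewrite /nu /mscale /= => ->.
  by rewrite /pushforward muleA -EFinM mulfV ?gt_eqF // mul1e.
move=> _ [[x y] _ <-]; rewrite /mscale /= /pushforward.
have -> : phi @^-1` `]x, y] = `](x * c + al), (y * c + al)]%classic.
  apply/seteqP; split => u /=;
    rewrite !in_itv /= /phi /rescale ltr_pdivlMr // ler_pdivrMr //;
    by case/andP => h1 h2; apply/andP; split; lra.
rewrite (lebesgue_measure_itv `]x, y]).
rewrite (lebesgue_measure_itv `](x * c + al), (y * c + al)]) /= !lte_fin.
rewrite ltrD2r ltr_pM2r //; case: ifPn => _; last by rewrite mule0.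
by rewrite -!EFinB -EFinM; congr (_%:E); field; rewrite gt_eqF.
Qed.

Lemma lebesgue_measure_setI_itvoc01 (R : realType) (C : set R) : measurable C ->
  lebesgue_measure (C `&` `]0%R, 1%R]) = lebesgue_measure (C `&` `[0%R, 1%R]).
Proof.
move=> mC.
have -> : C `&` `[0%R, 1%R] = (C `&` `]0%R, 1%R]) `|` (C `&` [set 0%R]).
  apply/seteqP; split => u /=; rewrite !in_itv /=.
    move=> [Cu /andP[u0 u1]]; have [ue|un0] := eqVneq u 0%R; [by right; rewrite -ue|left].
    by split => //; rewrite u1 andbT lt_neqAle eq_sym un0.
  move=> [[Cu /andP[u0 u1]]|[Cu ue]]; split => //; first by rewrite (ltW u0) u1.
  by rewrite ue lexx ler01.
rewrite measureU0 //; [exact: measurableI | exact: measurableI |].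
apply: (@subset_measure0 _ _ _ lebesgue_measure (C `&` [set 0%R]) [set 0%R]).
- exact: measurableI.
- by [].
- exact: subIsetr.
- exact: lebesgue_measure_set1.
Qed.

Definition rescales_uniform {R : realType} (I : set R) (al c : R) : Prop :=
  forall C : set R, measurable C ->
    lebesgue_measure ((I `&` rescale al c @^-1` C) `&` `[0%R, 1%R]) =
    (c%:E * lebesgue_measure (C `&` `[0%R, 1%R]))%E.

Lemma rescales_uniform_left (R : realType) (t : R) :
  0 < t -> t <= 1 -> rescales_uniform `]-oo, t] 0 t.
Proof.
move=> t0 t1 C mC; rewrite -(lebesgue_measure_preimage_rescale 0 t0);
  last exact: measurableI.
congr (lebesgue_measure _); apply/seteqP; split => u /=;
  rewrite !in_itv /= /rescale subr0.
  move=> [[ut Cu] /andP[u0 u1]]; split => //.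
  by rewrite divr_ge0 ?(ltW t0) //= ler_pdivrMr // mul1r.
move=> [Cu /andP[u0 u1]]; rewrite ler_pdivrMr // mul1r in u1.
have u0' : 0 <= u by have := mulr_ge0 u0 (ltW t0); rewrite divfK ?gt_eqF.
by split; [split|rewrite u0' /= (le_trans u1)].
Qed.

Lemma rescales_uniform_right (R : realType) (t : R) :
  0 <= t -> t < 1 -> rescales_uniform `]t, +oo[ t (1 - t).
Proof.
move=> t0 t1 C mC; have t1' : 0 < 1 - t by rewrite subr_gt0.
rewrite -[X in (_ * X)%E]lebesgue_measure_setI_itvoc01 //.
rewrite -(lebesgue_measure_preimage_rescale t t1'); last exact: measurableI.
congr (lebesgue_measure _); apply/seteqP; split => u /=;
  rewrite !in_itv /= ?andbT /rescale.
  move=> [[ut Cu] /andP[u0 u1]]; split => //.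
  by rewrite divr_gt0 ?subr_gt0 //= ler_pdivrMr // mul1r lerD2r.
move=> [Cu /andP[u0 u1]]; rewrite ler_pdivrMr // mul1r lerBlDr subrK in u1.
have ut : t < u by have := mulr_gt0 u0 t1'; rewrite divfK ?gt_eqF // subr_gt0.
by split; [split|rewrite u1 andbT; apply: (le_trans t0); exact: ltW].
Qed.

Section rescaled_fading_state.
Context (d : measure_display) (Om : measurableType d) (R : realType)
  (P : probability Om R) (h U : Om -> R).
Hypothesis hmodel : fading_model P h U.
Context (I : set R) (mI : measurable I) (al c : R) (c0 : 0 < c).
Hypothesis rescI : rescales_uniform I al c.

Let mh : measurable_fun setT h. Proof. by case: hmodel => -[]. Qed.
Let mU : measurable_fun setT U. Proof. by case: hmodel => -[]. Qed.
Let D := U @^-1` I.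
Let mD : measurable D. Proof. by rewrite -[D]setTI; exact: mU. Qed.
Let rescaled_state w := (h w, rescale al c (U w)).
Let mstate : measurable_fun setT (fstate h U).
Proof. exact: measurable_fun_pair. Qed.
Let mrescaled : measurable_fun setT rescaled_state.
Proof.
apply: measurable_fun_pair => //.
exact: measurableT_comp (measurable_rescale al c) mU.
Qed.
Let c0' : 0 <= c. Proof. exact: ltW. Qed.

(* Both sides are finite measures agreeing on rectangles, by the independence
   of [h] and [U] and the uniformity of [U]. *)
Lemma image_measure_rescaled_state (A : set (R * R)) : measurable A ->
  image_measure (restricted_measure P mD) mrescaled A =
  mscale (NngNum c0') (image_measure P mstate) A.
Proof.
move=> mA.
apply: (measure_unique [set A `*` B | A in measurable & B in measurable]
  (fun=> setT)) => //.
- exact: measurable_prod_measurableType.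
- move=> _ _ [A1 mA1 [B1 mB1 <-]] [A2 mA2 [B2 mB2 <-]]; rewrite -setXI.
  exists (A1 `&` A2); first exact: measurableI.
  by exists (B1 `&` B2) => //; exact: measurableI.
- by move=> _; exists setT => //; exists setT => //; rewrite setXTT.
- by rewrite bigcup_const //; exists 0%N.
- move=> _ [A1 mA1 [B1 mB1 <-]]; rewrite /= /pushforward /mrestr /mscale /=.
  have [_ _ _ hunif hind] := hmodel.
  have mpB : measurable (rescale al c @^-1` B1).
    by rewrite -[_ @^-1` _]setTI; exact: measurable_rescale.
  have -> : rescaled_state @^-1` (A1 `*` B1) `&` D =
      h @^-1` A1 `&` U @^-1` (I `&` rescale al c @^-1` B1).
    by apply/seteqP; split => w /=; rewrite /D /rescaled_state /=; tauto.
  have -> : pushforward P (fstate h U) (A1 `*` B1) =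
      P (h @^-1` A1 `&` U @^-1` B1) by [].
  rewrite !hind //; last exact: measurableI.
  rewrite !hunif //; last exact: measurableI.
  by rewrite rescI // muleCA.
- move=> _; rewrite /= /pushforward /mrestr preimage_setT setTI.
  by apply: (le_lt_trans (probability_le1 P _)); rewrite ?ltry.
Qed.

Lemma integral_rescaled_state (G : R * R -> R) :
  measurable_fun setT G -> (forall s, 0 <= G s) ->
  (\int[P]_(w in U @^-1` I) (G (h w, rescale al c (U w)))%:E =
   c%:E * \int[P]_w (G (fstate h U w))%:E)%E.
Proof.
move=> mG G0.
have mGE : measurable_fun setT (fun s => (G s)%:E) by exact/measurable_EFinP.
have GE0 : {in setT, forall s, (0 <= (G s)%:E)%E} by move=> s _; rewrite lee_fin.
have -> : (\int[P]_w (G (fstate h U w))%:E =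
    \int[image_measure P mstate]_s (G s)%:E)%E.
  by rewrite (ge0_integral_pushforward mstate) //= preimage_setT.
have -> : (c%:E * \int[image_measure P mstate]_s (G s)%:E =
    \int[mscale (NngNum c0') (image_measure P mstate)]_s (G s)%:E)%E.
  by rewrite ge0_integral_mscale // => s _; rewrite lee_fin.
rewrite (eq_measure_integral (image_measure (restricted_measure P mD) mrescaled));
  last by move=> A mA _; rewrite image_measure_rescaled_state.
rewrite (ge0_integral_pushforward mrescaled) //= preimage_setT.
rewrite (@ge0_negligible_integral _ _ _ (restricted_measure P mD) setT (~` D)) //.
- rewrite setTD setCK; apply: eq_measure_integral => A mA AD.
  by rewrite /= /mrestr setIidl.
- exact: measurableC.
- exact/measurable_EFinP/(measurableT_comp mG mrescaled).
- by move=> y _; rewrite lee_fin.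
- by rewrite /= /mrestr setICl measure0.
Qed.

End rescaled_fading_state.

Section timesharing.
Context (d : measure_display) (Om : measurableType d) (R : realType)
  (P : probability Om R) (h U : Om -> R).
Hypothesis hmodel : fading_model P h U.
Context (t : R) (t0 : 0 < t) (t1 : t < 1).

Let mh : measurable_fun setT h. Proof. by case: hmodel => -[]. Qed.
Let mU : measurable_fun setT U. Proof. by case: hmodel => -[]. Qed.

Lemma integral_timeshare (Fx Fy : R * R -> R) :
  measurable_fun setT Fx -> measurable_fun setT Fy ->
  (forall s, 0 <= Fx s) -> (forall s, 0 <= Fy s) ->
  (\int[P]_w (timeshare t Fx Fy (fstate h U w))%:E =
   t%:E * \int[P]_w (Fx (fstate h U w))%:E +
   (1 - t)%:E * \int[P]_w (Fy (fstate h U w))%:E)%E.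
Proof.
move=> mFx mFy Fx0 Fy0.
pose Dx := U @^-1` `]-oo, t]; pose Dy := U @^-1` `]t, +oo[.
have mDx : measurable Dx by rewrite -[Dx]setTI; exact: mU.
have mDy : measurable Dy by rewrite -[Dy]setTI; exact: mU.
have DxUDy : [set: Om] = Dx `|` Dy.
  apply/seteqP; split => w //= _; rewrite /Dx /Dy /= !in_itv /= andbT.
  by case: (leP (U w) t) => ?; [left|right].
rewrite {1}DxUDy ge0_integral_setU //; first last.
- apply/disj_set2P/seteqP; split => w //=.
  by rewrite /Dx /Dy /= !in_itv /= andbT => -[/le_lt_trans/[apply]]; rewrite ltxx.
- by move=> w _; rewrite /timeshare; case: ifP => _; rewrite lee_fin.
- rewrite -DxUDy; apply/measurable_EFinP.
  exact: measurableT_comp (measurable_timeshare t mFx mFy) (measurable_fun_pair mh mU).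
congr (_ + _)%E.
- have rescx := rescales_uniform_left t0 (ltW t1).
  rewrite -(integral_rescaled_state hmodel (measurable_itv _) t0 rescx mFx Fx0).
  apply: eq_integral => w; rewrite inE /Dx /= in_itv /= => Ut.
  by rewrite /timeshare /= Ut.
- have t1' : 0 < 1 - t by rewrite subr_gt0.
  have rescy := rescales_uniform_right (ltW t0) t1.
  rewrite -(integral_rescaled_state hmodel (measurable_itv _) t1' rescy mFy Fy0).
  apply: eq_integral => w; rewrite inE /Dy /= in_itv /= andbT => tU.
  by rewrite /timeshare /= leNgt tU.
Qed.

Context (px rx py ry : R * R -> R).
Hypotheses (mpx : measurable_fun setT px) (mrx : measurable_fun setT rx).
Hypotheses (mpy : measurable_fun setT py) (mry : measurable_fun setT ry).
Hypotheses (px0 : forall s, 0 <= px s) (rx01 : forall s, 0 <= rx s <= 1).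
Hypotheses (py0 : forall s, 0 <= py s) (ry01 : forall s, 0 <= ry s <= 1).

(* [h] is positive, so it may be replaced by [Num.max h 0]; this makes the
   integrands nonnegative on the whole plane, as [integral_timeshare] needs. *)
Lemma expectation_timeshare (K : R -> R -> R -> R) :
  measurable_fun setT (fun v : R * R * R => K v.1.1 v.1.2 v.2) ->
  (forall g p r, 0 <= g -> 0 <= p -> 0 <= r <= 1 -> 0 <= K g p r) ->
  ('E_P[fun w => K (h w) (timeshare t px py (fstate h U w))
                         (timeshare t rx ry (fstate h U w))] =
   t%:E * 'E_P[fun w => K (h w) (px (fstate h U w)) (rx (fstate h U w))] +
   (1 - t)%:E * 'E_P[fun w => K (h w) (py (fstate h U w)) (ry (fstate h U w))])%E.
Proof.
move=> mK K0.
have hmax w : Num.max (h w) 0 = h w.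
  by rewrite max_l // ltW //; case: hmodel => _ + _ _ _; apply.
pose F (p r : R * R -> R) (s : R * R) := K (Num.max s.1 0) (p s) (r s).
have mF p r : measurable_fun setT p -> measurable_fun setT r ->
    measurable_fun setT (F p r).
  move=> mp mr.
  have mmax : measurable_fun [set: R * R] (fun s => Num.max s.1 0).
    by apply: measurable_maxr => //; exact: measurable_fst.
  exact: measurableT_comp mK (measurable_fun_pair (measurable_fun_pair mmax mp) mr).
have F0 p r : (forall s, 0 <= p s) -> (forall s, 0 <= r s <= 1) ->
    forall s, 0 <= F p r s.
  by move=> p0 r01 s; apply: K0 => //; rewrite le_max lexx orbT.
have eF p r : (\int[P]_w (K (h w) (p (fstate h U w)) (r (fstate h U w)))%:E =
    \int[P]_w (F p r (fstate h U w))%:E)%E.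
  by apply: eq_integral => w _; rewrite /F /= hmax.
rewrite !unlock (eF px rx) (eF py ry) (eF (timeshare t px py) (timeshare t rx ry)).
rewrite -(integral_timeshare (mF _ _ mpx mrx) (mF _ _ mpy mry)
  (F0 _ _ px0 rx01) (F0 _ _ py0 ry01)).
by apply: eq_integral => w _; rewrite /F /timeshare /=; case: ifP.
Qed.

End timesharing.

Section channel_functions.
Context (R : realType).

Let mgain : measurable_fun [set: R * R * R] (fun v => v.1.1).
Proof. exact: measurableT_comp measurable_fst measurable_fst. Qed.
Let mpower : measurable_fun [set: R * R * R] (fun v => v.1.2).
Proof. exact: measurableT_comp measurable_snd measurable_fst. Qed.
Let msplit : measurable_fun [set: R * R * R] (fun v => v.2).
Proof. exact: measurable_snd. Qed.

Lemma measurable_logistic : measurable_fun [set: R] (fun x => 1 / (1 + expR x)).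
Proof.
under eq_fun do rewrite div1r.
apply: continuous_measurable_fun => x.
have den0 : 1 + expR x != 0 :> R by rewrite gt_eqF // ltr_pwDl // expR_ge0.
have cden : {for x, continuous (fun y : R => 1 + expR y)}.
  by apply: continuousD; [exact: cvg_cst | exact: continuous_expR].
exact: (@continuousV _ _ (fun y : R => 1 + expR y) x den0 cden).
Qed.

Lemma measurable_rate (sigma2 : R) :
  measurable_fun [set: R * R * R] (fun v => rate sigma2 v.1.1 v.1.2 v.2).
Proof.
apply: measurableT_comp; first exact: measurable_ln.
apply: measurable_funD => //; apply: measurable_funM => //.
apply: measurable_funM => //; apply: measurable_funM => //.
exact: measurable_funB.
Qed.

Lemma measurable_QNL (a b Ps T : R) :
  measurable_fun [set: R * R * R] (fun v => QNL a b Ps T v.1.1 v.1.2 v.2).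
Proof.
rewrite /QNL /Psi; apply: measurable_funM => //; apply: measurable_funM => //.
apply: measurable_funB => //; apply: measurableT_comp measurable_logistic _.
apply: measurableT_comp => //; apply: measurable_funM => //.
by apply: measurable_funB => //; do 2 apply: measurable_funM => //.
Qed.

Lemma rate_ge0 (sigma2 g p rho : R) : 0 < sigma2 -> 0 <= g -> 0 <= p ->
  rho <= 1 -> 0 <= rate sigma2 g p rho.
Proof.
move=> s0 g0 p0 r1; apply: ln_ge0; rewrite lerDl divr_ge0 ?(ltW s0) //.
by rewrite !mulr_ge0 // subr_ge0.
Qed.

Lemma Omg_lt1 (a b : R) : Omg a b < 1.
Proof.
rewrite /Omg ltr_pdivrMr ?mul1r; last by rewrite ltr_wpDr // ?expR_ge0.
by rewrite ltrDl expR_gt0.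
Qed.

(* [Omg a b] is the value of [Psi] at zero received power and [Psi] increases
   with it. *)
Lemma QNL_ge0 (a b Ps T g p rho : R) : 0 < a -> 0 <= Ps -> 0 <= T ->
  0 <= g -> 0 <= p -> 0 <= rho -> 0 <= QNL a b Ps T g p rho.
Proof.
move=> a0 Ps0 T0 g0 p0 r0.
rewrite /QNL divr_ge0 ?mulr_ge0 ?subr_ge0 ?(ltW (Omg_lt1 a b)) //.
rewrite /Psi /Omg !div1r lef_pV2 ?posrE ?ltr_wpDr ?expR_ge0 //.
rewrite lerD2l ler_expR mulrBr opprB lerBlDr lerDl.
by rewrite mulr_ge0 ?(ltW a0) ?mulr_ge0.
Qed.

End channel_functions.

Unset Implicit Arguments.

Theorem lemma4 (d : measure_display) (Om : measurableType d) (R : realType)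
  (P : probability Om R) (h U : Om -> R)
  (a b Ps T sigma2 Pmax : R)
  (ha : 0 < a) (hb : 0 < b) (hPs : 0 < Ps) (hT : 0 < T) (hs : 0 < sigma2)
  (hPmax : 0 < Pmax)
  (hmodel : fading_model P h U)
  (Qx Pavgx Qy Pavgy : R)
  (Px rhox Py rhoy : R * R -> R)
  (optx : P2_optimal P h U a b Ps T sigma2 Pmax Qx Pavgx Px rhox)
  (opty : P2_optimal P h U a b Ps T sigma2 Pmax Qy Pavgy Py rhoy)
  (theta : R) (htheta : 0 <= theta <= 1) :
  exists Pz rhoz : R * R -> R,
    [/\ policy Pz /\ policy rhoz,
        (forall x, 0 <= Pz x <= Pmax) /\ (forall x, 0 <= rhoz x <= 1),
        (Eenergy P h U a b Ps T Pz rhoz >= (theta * Qx + (1 - theta) * Qy)%:E)%E,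
        (Epower P h U Pz <= (theta * Pavgx + (1 - theta) * Pavgy)%:E)%E
      & (Erate P h U sigma2 Pz rhoz >=
          theta%:E * Erate P h U sigma2 Px rhox
          + (1 - theta)%:E * Erate P h U sigma2 Py rhoy)%E].
Proof.
case: optx => -[[mPx mrx] bPx brx Ex Powx] _.
case: opty => -[[mPy mry] bPy bry Ey Powy] _.
case/andP: htheta; rewrite le_eqVlt => /predU1P[<- _|t0].
  by exists Py, rhoy; rewrite !(mul0r, add0r, subr0, mul1r, mul0e, add0e, mul1e).
rewrite le_eqVlt => /predU1P[->|t1].
  by exists Px, rhox; rewrite !(mul1r, subrr, mul0r, addr0, mul1e, mul0e, adde0).
have Px0 s : 0 <= Px s by case/andP: (bPx s).
have Py0 s : 0 <= Py s by case/andP: (bPy s).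
have Etimeshare := expectation_timeshare hmodel t0 t1 mPx mrx mPy mry Px0 brx Py0 bry.
have t1' : (0 <= (1 - theta)%:E)%E by rewrite lee_fin subr_ge0 ltW.
exists (timeshare theta Px Py), (timeshare theta rhox rhoy); split.
- by split; apply: measurable_timeshare.
- by split => s; rewrite /timeshare; case: ifP.
- rewrite /Eenergy Etimeshare.
  + rewrite [X in (X <= _)%E]EFinD !EFinM.
    by apply: leeD; apply: lee_wpmul2l => //; rewrite lee_fin ltW.
  + exact: measurable_QNL.
  + by move=> g p r g0 p0 /andP[r0 _]; apply: QNL_ge0 => //; exact: ltW.
- have mpower : measurable_fun [set: R * R * R] (fun v => v.1.2).
    exact: measurableT_comp measurable_snd measurable_fst.
  have := Etimeshare (fun _ p _ => p) mpower (fun _ _ _ _ p0 _ => p0).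
  cbv beta; rewrite /Epower => ->.
  rewrite [X in (_ <= X)%E]EFinD !EFinM.
  by apply: leeD; apply: lee_wpmul2l => //; rewrite lee_fin ltW.
- rewrite /Erate Etimeshare //; first exact: measurable_rate.
  by move=> g p r g0 p0 /andP[_ r1]; apply: rate_ge0.
Qed.
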